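(* For every $n\ge3$, every maximally even set of vertices of $C_n$ is a maximizer of $W$ on $C_n$. However, the converse fails: there exist $n$ and sets of vertices of $C_n$ that are maximizers of $W$ but are not maximally even.
   Context: $C_n$ has vertex set $\{0,\dots,n-1\}$ with $i$ adjacent to $i+1\bmod n$; $d$ is geodesic distance and $d^*(u,v)$ the least non-negative integer congruent to $v-u$ mod $n$. $W(A)=\sum_{\{u,v\}\subseteq A,u\ne v}d(u,v)$; $A$ is a maximizer of $W$ if $W(A)=\max\{W(B):|B|=|A|\}$. For $A=\{a_0<\dots<a_{m-1}\}$, $\mathrm{span}_A(a_i,a_j)$ is the least positive integer congruent to $j-i$ mod $m$, and $\sigma^*_k(A)=[\,d^*(u,v):u,v\in A,u\ne v,\mathrm{span}_A(u,v)=k\,]$. $A$ is maximally even if for each $1\le k\le m-1$ the set of values of $\sigma^*_k(A)$ is one integer or two consecutive integers. *)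

From mathcomp Require Import all_boot.
Set Implicit Arguments. Unset Strict Implicit. Unset Printing Implicit Defensive.

Section Cycle.
Variable n : nat.

Definition dstar (u v : 'I_n) : nat := (v + n - u) %% n.

Definition dist (u v : 'I_n) : nat := minn (dstar u v) (dstar v u).

Definition W (A : {set 'I_n}) : nat :=
  \sum_(u in A) \sum_(v in A | u < v) dist u v.

Definition maximizer (A : {set 'I_n}) : Prop :=
  forall B : {set 'I_n}, #|B| = #|A| -> W B <= W A.

(* index i of u in the increasing enumeration a_0 < ... < a_{m-1} of A *)
Definition idx (A : {set 'I_n}) (u : 'I_n) : nat := #|[set x in A | x < u]|.

(* span_A(a_i, a_j): least positive integer congruent to j - i mod m
   (for a_i <> a_j this is (j - i) mod m, which lies in 1..m-1) *)
Definition span (A : {set 'I_n}) (u v : 'I_n) : nat :=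
  (idx A v + #|A| - idx A u) %% #|A|.

Definition max_even (A : {set 'I_n}) : Prop :=
  forall k, 1 <= k <= #|A| - 1 ->
    (exists u v, [/\ u \in A, v \in A, u != v & span A u v = k]) /\
    exists c : nat, forall u v, u \in A -> v \in A -> u != v ->
      span A u v = k -> dstar u v = c \/ dstar u v = c.+1.

End Cycle.

(* Enumerate a set B of m vertices cyclically as b_0 < ... < b_(m-1), indices
   mod m.  Counting each pair twice, 2 W(B) is the sum over the span
   k = 1 .. m-1 of the k-th layer sum_j dist(b_j, b_(j+k)), and
   dist(b_j, b_(j+k)) = f(d*(b_j, b_(j+k))) with f x = min(x, n - x).  The
   layer's directed distances always add up to k n, whatever B is, because
   the k-steps b_j -> b_(j+k) wind k times around the cycle.  As f is
   concave, a sum of f over m numbers of fixed total is largest when the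
   numbers differ by at most one, which is exactly what maximal evenness
   asserts of each layer.  Conversely, {0,1,3} in C_6 has the same W as the
   maximally even {0,2,4} without being maximally even itself. *)
From mathcomp Require Import all_boot.
From mathcomp Require Import zify.
Set Implicit Arguments. Unset Strict Implicit. Unset Printing Implicit Defensive.

Section Rank.
Variables (n : nat) (B : {set 'I_n}).

Lemma idx_ltn_card u : u \in B -> idx B u < #|B|.
Proof.
move=> uB; rewrite /idx (cardsD1 u B) uB add1n ltnS.
apply: subset_leq_card; apply/subsetP => x; rewrite !inE => /andP[xB xu].
by rewrite xB andbT; apply: contraTneq xu => ->; rewrite ltnn.
Qed.

Lemma idx_ltn (u v : 'I_n) : u \in B -> u < v -> idx B u < idx B v.
Proof.
move=> uB uv; rewrite /idx (cardsD1 u [set x in B | x < v]) inE uB uv add1n ltnS.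
apply: subset_leq_card; apply/subsetP => x; rewrite !inE => /andP[xB xu].
rewrite xB (ltn_trans xu uv) !andbT.
by apply: contraTneq xu => ->; rewrite ltnn.
Qed.

Lemma idx_inj : {in B &, injective (idx B)}.
Proof.
move=> u v uB vB e; case: (ltngtP u v) => [uv | vu | /val_inj //].
- by have := idx_ltn uB uv; rewrite e ltnn.
- by have := idx_ltn vB vu; rewrite e ltnn.
Qed.

Lemma idx_onto j : j < #|B| -> exists2 u, u \in B & idx B u = j.
Proof.
move=> jB; have m_gt0 : 0 < #|B| by apply: leq_ltn_trans jB.
pose h (u : 'I_n) : 'I_#|B|.-1.+1 := inord (idx B u).
have hE u : u \in B -> val (h u) = idx B u.
  by move=> uB; rewrite /h /= inordK ?prednK ?idx_ltn_card.
have h_inj : {in B &, injective h}.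
  by move=> u v uB vB /(congr1 val); rewrite !hE //; apply: idx_inj.
have h_onto : h @: B = [set: 'I_#|B|.-1.+1].
  by apply/eqP; rewrite eqEcard subsetT cardsT card_ord card_in_imset // prednK ?leqnn.
have : inord j \in h @: B by rewrite h_onto in_setT.
case/imsetP => u uB /(congr1 val); rewrite hE // /= inordK ?prednK // => ->.
by exists u.
Qed.

(* [x0] is a junk default, irrelevant once [x0 \in B]. *)
Definition at_rank (x0 : 'I_n) (j : nat) : 'I_n :=
  odflt x0 [pick u in B | idx B u == j %% #|B|].

Variable x0 : 'I_n.
Hypothesis x0B : x0 \in B.

Let m_gt0 : 0 < #|B|.
Proof. by apply/card_gt0P; exists x0. Qed.

Lemma at_rankP j : at_rank x0 j \in B /\ idx B (at_rank x0 j) = j %% #|B|.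
Proof.
rewrite /at_rank; case: pickP => [u /andP[uB /eqP ->] | noB] //=.
have [u uB hu] := idx_onto (ltn_pmod j m_gt0).
by move: (noB u); rewrite uB hu eqxx.
Qed.

Lemma at_rankDcard j : at_rank x0 (j + #|B|) = at_rank x0 j.
Proof. by rewrite /at_rank modnDr. Qed.

Lemma at_rank_idx u : u \in B -> at_rank x0 (idx B u) = u.
Proof.
move=> uB; have [rB rE] := at_rankP (idx B u).
by apply: idx_inj; rewrite // rE modn_small ?idx_ltn_card.
Qed.

Lemma at_rank_ltn j j' : j < j' < #|B| -> at_rank x0 j < at_rank x0 j'.
Proof.
move=> /andP[jj' j'B]; have jB := ltn_trans jj' j'B.
have [rB rE] := at_rankP j; have [rB' rE'] := at_rankP j'.
rewrite !modn_small // in rE rE'.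
case: ltngtP => // [gt_b | /val_inj eq_b].
- by have := idx_ltn rB' gt_b; rewrite rE rE' ltnNge (ltnW jj').
- by move: jj'; rewrite -rE -rE' eq_b ltnn.
Qed.

Lemma sum_at_rank (F : 'I_n -> nat) :
  \sum_(u in B) F u = \sum_(j < #|B|) F (at_rank x0 j).
Proof.
rewrite (reindex_onto (fun j : 'I_#|B| => at_rank x0 j)
   (fun u => Ordinal (ltn_pmod (idx B u) m_gt0))) /=.
  apply: eq_bigl => j; have [-> ->] := at_rankP j.
  by apply/eqP; apply: val_inj; rewrite /= modn_mod modn_small.
by move=> u uB; apply: val_inj; rewrite /= (modn_small (idx_ltn_card uB)) at_rank_idx.
Qed.

Lemma span_at_rank j K : j < #|B| -> 0 < K < #|B| ->
  span B (at_rank x0 j) (at_rank x0 (j + K)) = K.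
Proof.
move=> jB /andP[K_gt0 KB]; rewrite /span.
have [_ ->] := at_rankP j; have [_ ->] := at_rankP (j + K).
move: jB KB; set m := #|B| => jB KB; clearbody m.
rewrite (modn_small jB); case: (ltnP (j + K) m) => jKm.
  by rewrite (modn_small jKm) -addnBAC ?leq_addr // addKn modnDr modn_small.
rewrite -{1}(subnK jKm) modnDr (@modn_small (j + K - m)); last by lia.
by rewrite (_ : j + K - m + m - j = K) ?modn_small //; lia.
Qed.

End Rank.

Lemma span_uu n (B : {set 'I_n}) u : span B u u = 0.
Proof. by rewrite /span addKn modnn. Qed.

Lemma sum_ord_shift m k (h : nat -> nat) : (forall j, h (j + m) = h j) ->
  \sum_(j < m) h (j + k) = \sum_(j < m) h j.
Proof.
elim: k h => [|k IH] h hp; first by apply: eq_bigr => j _; rewrite addn0.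
under eq_bigr => j _ do rewrite addnS.
rewrite (IH (fun i => h i.+1)); last by move=> j; rewrite /= -addSn hp.
case: m hp {IH} => [|m] hp; first by rewrite !big_ord0.
by rewrite big_ord_recr big_ord_recl /= addnC -(hp 0) add0n.
Qed.

Section Distances.
Variable n : nat.
Implicit Types u v : 'I_n.

Lemma dstar_leq u v : u <= v -> dstar u v = v - u.
Proof.
move=> uv; rewrite /dstar -addnBAC // modnDr modn_small //.
exact: leq_ltn_trans (leq_subr u v) (ltn_ord v).
Qed.

Lemma dstar_gtn u v : v < u -> dstar u v = v + n - u.
Proof. by move=> vu; rewrite /dstar modn_small //; have := ltn_ord u; lia. Qed.

Lemma dstar_ltn u v : dstar u v < n.
Proof. by rewrite /dstar ltn_pmod // (leq_ltn_trans (leq0n u) (ltn_ord u)). Qed.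

Lemma dist_dstar u v : dist u v = minn (dstar u v) (n - dstar u v).
Proof.
rewrite /dist; case: (ltngtP u v) => [uv | vu | /val_inj ->].
- by rewrite (dstar_leq (ltnW uv)) (dstar_gtn uv); have := ltn_ord v; lia.
- by rewrite (dstar_leq (ltnW vu)) (dstar_gtn vu); have := ltn_ord u; lia.
- by rewrite dstar_leq // subnn !min0n.
Qed.

Lemma distC u v : dist u v = dist v u.
Proof. by rewrite /dist minnC. Qed.

Lemma distuu u : dist u u = 0.
Proof. by rewrite /dist dstar_leq // subnn min0n. Qed.

Lemma W_double (B : {set 'I_n}) :
  W B * 2 = \sum_(u in B) \sum_(v in B) dist u v.
Proof.
rewrite muln2 -addnn {2}/W (exchange_big_dep (mem B)) /=; last by move=> u v _ /andP[].
rewrite /W -big_split /=; apply: eq_bigr => u uB.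
rewrite [RHS](bigD1 u) //= distuu add0n [RHS](bigID (fun v : 'I_n => u < v)) /=.
congr (_ + _); apply: eq_big => v.
- by rewrite -val_eqE /=; case: ltngtP; rewrite ?andbT ?andbF.
- by [].
- by rewrite -val_eqE /= uB; case: ltngtP; rewrite ?andbT ?andbF.
- by rewrite distC.
Qed.

Section Layers.
Variables (B : {set 'I_n}) (x0 : 'I_n).
Hypothesis x0B : x0 \in B.
Local Notation b := (at_rank B x0).

Lemma W_double_layers :
  W B * 2 = \sum_(k < #|B|.-1) \sum_(j < #|B|) dist (b j) (b (j + k.+1)).
Proof.
have m_gt0 : 0 < #|B| by apply/card_gt0P; exists x0.
rewrite W_double (sum_at_rank x0B) [RHS]exchange_big /=; apply: eq_bigr => j _.
rewrite (sum_at_rank x0B) -(@sum_ord_shift _ j (fun i => dist (b j) (b i))); last first.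
  by move=> i; rewrite at_rankDcard.
have big_recl (F : nat -> nat) : \sum_(i < #|B|) F i = F 0 + \sum_(k < #|B|.-1) F k.+1.
  by case: #|B| m_gt0 => // m _; rewrite big_ord_recl.
rewrite (big_recl (fun i => dist (b j) (b (i + j)))) add0n distuu add0n.
by apply: eq_bigr => k _; rewrite addnC.
Qed.

(* Steps with [j + K < #|B|] go forward; the other [K] steps wrap around the
   cycle and each contribute an extra [n]. *)
Lemma sum_dstar_layer K : 0 < K < #|B| ->
  \sum_(j < #|B|) dstar (b j) (b (j + K)) = K * n.
Proof.
move=> /andP[K_gt0 KB]; apply: (@addIn (\sum_(j < #|B|) val (b j))).
rewrite -big_split /=.
rewrite (eq_bigr (fun j : 'I_#|B| => val (b (j + K)) + (if j < #|B| - K then 0 else n))); last first.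
  move=> j _; have jB := ltn_ord j; case: ifP => jK.
    have lt_b : b j < b (j + K) by apply: at_rank_ltn => //; lia.
    by rewrite dstar_leq ?(ltnW lt_b) // addn0 subnK // ltnW.
  have -> : b (j + K) = b (j + K - #|B|) by rewrite -[RHS]at_rankDcard subnK //; lia.
  have lt_b : b (j + K - #|B|) < b j by apply: at_rank_ltn => //; lia.
  by rewrite dstar_gtn // subnK // ltnW // (leq_trans (ltn_ord _) (leq_addl _ _)).
rewrite big_split /= (@sum_ord_shift _ K (fun i => val (b i))); last first.
  by move=> i; rewrite at_rankDcard.
rewrite addnC; congr (_ + _).
rewrite -(big_mkord xpredT (fun j => if j < #|B| - K then 0 else n)).
rewrite (@big_cat_nat _ _ _ (#|B| - K)) ?leq_subr //= big_nat_cond big1 ?add0n; last first.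
  by move=> i /andP[/andP[_ ->]].
rewrite big_nat_cond (eq_bigr (fun=> n)); last by move=> i /andP[/andP[+ _] _]; rewrite ltnNge => ->.
by rewrite -big_nat_cond sum_nat_const_nat subKn // ltnW.
Qed.

End Layers.
End Distances.

(* Discrete concavity of [x |-> minn x (n - x)]. *)
Lemma sum_minn_balanced n m c (x y : nat -> nat) :
  (forall j, j < m -> x j = c \/ x j = c.+1) ->
  (forall j, j < m -> x j <= n) -> (forall j, j < m -> y j <= n) ->
  \sum_(j < m) x j = \sum_(j < m) y j ->
  \sum_(j < m) minn (y j) (n - y j) <= \sum_(j < m) minn (x j) (n - x j).
Proof.
move=> x_bal x_le y_le sum_xy.
have x_c j : j < m -> c <= x j <= c.+1 by move=> /x_bal; lia.
case: (leqP c.*2.+2 n) => [c_small | c_big].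
  rewrite [X in _ <= X](eq_bigr (fun j : 'I_m => x j)); last first.
    by move=> j _; apply/minn_idPl; have := x_c j (ltn_ord j); lia.
  by rewrite sum_xy; apply: leq_sum => j _; apply: geq_minl.
case: (leqP n c.*2) => [c_large | c_mid].
  rewrite [X in _ <= X](eq_bigr (fun j : 'I_m => n - x j)); last first.
    by move=> j _; apply/minn_idPr; have := x_c j (ltn_ord j); lia.
  apply: (@leq_trans (\sum_(j < m) (n - y j))); first by apply: leq_sum => j _; apply: geq_minr.
  by rewrite !sumnB ?sum_xy // => j _; [exact: y_le (ltn_ord j) | exact: x_le (ltn_ord j)].
rewrite [X in _ <= X](eq_bigr (fun j : 'I_m => c)); last first.
  by move=> j _; have := x_c j (ltn_ord j); lia.
by apply: leq_sum => j _; lia.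
Qed.

Lemma max_even_maximizer n (A : {set 'I_n}) : max_even A -> maximizer A.
Proof.
move=> evenA B cardB.
have [A0 | A_gt0] := posnP #|A|.
  by rewrite (cards0_eq (etrans cardB A0)) /W big_set0.
have [x0 x0A] := card_gt0P A_gt0.
have [y0 y0B] : exists y0, y0 \in B by apply/card_gt0P; rewrite cardB.
rewrite -(leq_pmul2r (isT : 0 < 2)) (W_double_layers y0B) (W_double_layers x0A) cardB.
apply: leq_sum => k _; have kA : 0 < k.+1 < #|A| by rewrite ltn0Sn /= -ltn_predRL.
have [_ [c evenAk]] := evenA k.+1 ltac:(by rewrite subn1 ltn_predRL kA).
under eq_bigr do rewrite dist_dstar; under [X in _ <= X]eq_bigr do rewrite dist_dstar.
apply: (sum_minn_balanced (c := c)
  (x := fun j => dstar (at_rank A x0 j) (at_rank A x0 (j + k.+1)))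
  (y := fun j => dstar (at_rank B y0 j) (at_rank B y0 (j + k.+1)))) => [j jA | j _ | j _ |].
- have [aA _] := at_rankP x0A j; have [aA' _] := at_rankP x0A (j + k.+1).
  have spanA := span_at_rank x0A jA kA.
  by apply: evenAk => //; apply: contra_eqN spanA => /eqP->; rewrite span_uu.
- exact/ltnW/dstar_ltn.
- exact/ltnW/dstar_ltn.
- have layerB := @sum_dstar_layer _ _ _ y0B k.+1; rewrite cardB in layerB.
  by rewrite (sum_dstar_layer x0A kA) layerB.
Qed.

Definition v0 : 'I_6 := @Ordinal 6 0 isT.
Definition v1 : 'I_6 := @Ordinal 6 1 isT.
Definition v2 : 'I_6 := @Ordinal 6 2 isT.
Definition v3 : 'I_6 := @Ordinal 6 3 isT.
Definition v4 : 'I_6 := @Ordinal 6 4 isT.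

Definition triangle : {set 'I_6} := v0 |: (v2 |: [set v4]).
Definition skew_triangle : {set 'I_6} := v0 |: (v1 |: [set v3]).

Lemma card_triangle : #|triangle| = 3.
Proof. by rewrite !cardsU1 cards1 !inE. Qed.

Lemma card_skew_triangle : #|skew_triangle| = 3.
Proof. by rewrite !cardsU1 cards1 !inE. Qed.

Lemma idx_triangle :
  [/\ idx triangle v0 = 0, idx triangle v2 = 1 & idx triangle v4 = 2].
Proof.
have := @idx_ltn _ triangle v0 v2; have := @idx_ltn _ triangle v2 v4.
have := @idx_ltn_card _ triangle v4; rewrite card_triangle !inE eqxx /=.
by move=> ? ? ?; split; lia.
Qed.

Lemma idx_skew_triangle :
  [/\ idx skew_triangle v0 = 0, idx skew_triangle v1 = 1 & idx skew_triangle v3 = 2].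
Proof.
have := @idx_ltn _ skew_triangle v0 v1; have := @idx_ltn _ skew_triangle v1 v3.
have := @idx_ltn_card _ skew_triangle v3; rewrite card_skew_triangle !inE eqxx /=.
by move=> ? ? ?; split; lia.
Qed.

Lemma max_even_triangle : max_even triangle.
Proof.
have [i0 i2 i4] := idx_triangle.
move=> k; rewrite card_triangle => k_range; split.
  have [-> | ->] : k = 1 \/ k = 2 by lia.
  - by exists v0, v2; rewrite /span i0 i2 card_triangle !inE eqxx.
  - by exists v0, v4; rewrite /span i0 i4 card_triangle !inE eqxx.
exists k.*2 => u v; rewrite !inE => /or3P[]/eqP-> /or3P[]/eqP-> //= _;
  by rewrite /span card_triangle ?i0 ?i2 ?i4 => <-; left.
Qed.

Lemma W_skew_triangle : W skew_triangle = W triangle.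
Proof.
rewrite /W !big_setU1 ?big_set1 ?inE //= !big_mkcondr /=.
by rewrite !big_setU1 ?big_set1 ?inE.
Qed.

Lemma skew_triangle_not_max_even : ~ max_even skew_triangle.
Proof.
have [i0 i1 i3] := idx_skew_triangle.
move=> /(_ 1 ltac:(by rewrite card_skew_triangle)) [_ [c even1]].
have := even1 v0 v1; have := even1 v3 v0.
rewrite /span i0 i1 i3 card_skew_triangle !inE eqxx /dstar /=; lia.
Qed.

Theorem mainTheorem15 :
  (forall (n : nat) (A : {set 'I_n}), 3 <= n -> max_even A -> maximizer A) /\
  (exists (n : nat) (A : {set 'I_n}), 3 <= n /\ maximizer A /\ ~ max_even A).
Proof.
split; first by move=> n A _; apply: max_even_maximizer.
exists 6, skew_triangle; split => //; split; last exact: skew_triangle_not_max_even.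
move=> B cardB; rewrite W_skew_triangle; apply: (max_even_maximizer max_even_triangle).
by rewrite cardB card_skew_triangle card_triangle.
Qed.
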